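(* Let $c_p\ge 1$ be an integer, let $k\ge 1$, and for each $1\le i\le k$ let $\gamma_i>0$ be a real constant, let $f_i(\alpha)$ be a pseudo-polynomial in $\alpha$, and let $g_i(n)$ be a pseudo-polynomial in $n$ in which every monomial $c\cdot n^{a}\ln^{b} n$ has $a\ge 0$ and $b\ge 0$. Put $$Q_L(\alpha,n):=\sum_{i=1}^{k}\gamma_i\cdot \exp\big(f_i(\alpha)+g_i(n)\big),$$ and consider the canonical constraint $$Q:\quad \exists \alpha_0\ \forall \alpha\ge \alpha_0\ \forall \text{ integers } n\ge c_p:\ Q_L(\alpha,n)\le 1 .$$ Run the procedure $\mathsf{Decide}$ (described in the context) on this input. Then: (1) (Completeness) If for arbitrarily large $\alpha$ there exists an integer $n\ge c_p$ with $Q_L(\alpha,n)>1$ (i.e. $Q$ does not hold), then $\mathsf{Decide}$ returns False. (2) (Soundness) For every $\varepsilon>0$: if there is $\alpha_0$ such that $Q_L(\alpha,n)\le 1-\varepsilon$ for all $\alpha\ge\alpha_0$ and all integers $n\ge c_p$, then $\mathsf{Decide}$ returns True.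
   Context: A pseudo-polynomial in a variable $x$ is a finite sum $\sum_j c_j\, x^{a_j}\ln^{b_j}x$ with real coefficients $c_j$ and integer exponents $a_j,b_j$ (considered for sufficiently large real $x$); limits as $x\to\infty$ are taken in $\mathbb{R}\cup\{\pm\infty\}$, with $\exp(-\infty)=0$. The procedure uses an oracle $\mathsf{NegativeLB}(P)$ that, given a pseudo-polynomial $P(n)$ for which such an integer exists, returns an integer $T^*$ such that $P(n)\le 0$ for every real $n\ge T^*$. Procedure $\mathsf{Decide}$: Step 1: set $T:=c_p$. For $i=1,\dots,k$: compute $M_i=\lim_{n\to\infty} g_i(n)$; if $M_i=+\infty$ return False; otherwise let $g_i'$ be the derivative of $g_i$ and set $T:=\max\{T,\mathsf{NegativeLB}(g_i')\}$. Step 2: for each integer $\bar n$ with $c_p\le \bar n\le T$: set $R:=0$; for $i=1,\dots,k$: compute $\Delta=\lim_{\alpha\to\infty}\big(f_i(\alpha)+g_i(\bar n)\big)$; if $\Delta=+\infty$ return False; otherwise set $R:=R+\gamma_i\exp(\Delta)$, and if $R\ge 1$ return False. Step 3: return True. *)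

From Stdlib Require Import Reals Lra ZArith List.
From Coquelicot Require Import Coquelicot.
Import ListNotations.
Open Scope R_scope.

(* A pseudo-polynomial sum_j c_j x^{a_j} ln^{b_j} x, as a list of (c_j, a_j, b_j). *)
Definition pp := list (R * Z * Z).

Definition pp_eval (P : pp) (x : R) : R :=
  fold_right (fun '(c, a, b) acc => c * powerRZ x a * powerRZ (ln x) b + acc) 0 P.

(* symbolic derivative: (c x^a ln^b x)' = c a x^(a-1) ln^b x + c b x^(a-1) ln^(b-1) x *)
Definition pp_deriv (P : pp) : pp :=
  flat_map (fun '(c, a, b) =>
    [(c * IZR a, (a - 1)%Z, b); (c * IZR b, (a - 1)%Z, (b - 1)%Z)]) P.

Definition lim_infty (h : R -> R) : Rbar := Lim h p_infty.

(* exp on R ∪ {-oo} with exp(-oo) = 0 (never applied to +oo by Decide) *)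
Definition rbar_exp (d : Rbar) : R :=
  match d with Finite r => exp r | _ => 0 end.

Definition NegativeLB_spec (O : pp -> Z) : Prop :=
  forall P : pp,
    (exists T : Z, forall n : R, IZR T <= n -> pp_eval P n <= 0) ->
    forall n : R, IZR (O P) <= n -> pp_eval P n <= 0.

(* Input: list of (gamma_i, f_i, g_i), i = 1..k *)
Definition input := list (R * pp * pp).

(* Step 1: returns None for "return False", Some T otherwise *)
Fixpoint decide_step1 (O : pp -> Z) (data : input) (T : Z) : option Z :=
  match data with
  | nil => Some T
  | (_, _, g) :: rest =>
      match lim_infty (pp_eval g) with
      | p_infty => None
      | _ => decide_step1 O rest (Z.max T (O (pp_deriv g)))
      end
  end.

Fixpoint decide_step2 (data : input) (nbar : R) (Racc : R) : bool :=
  match data with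
  | nil => true
  | (gam, f, g) :: rest =>
      match lim_infty (fun alpha => pp_eval f alpha + pp_eval g nbar) with
      | p_infty => false
      | d =>
          let R' := Racc + gam * rbar_exp d in
          if Rle_dec 1 R' then false else decide_step2 rest nbar R'
      end
  end.

Definition Zrange (lo hi : Z) : list Z :=
  map (fun i => (lo + Z.of_nat i)%Z) (seq 0 (Z.to_nat (hi - lo + 1))).

Definition Decide (O : pp -> Z) (cp : Z) (data : input) : bool :=
  match decide_step1 O data cp with
  | None => false
  | Some T => forallb (fun nbar => decide_step2 data (IZR nbar) 0) (Zrange cp T)
  end.

Definition QL (data : input) (alpha n : R) : R :=
  fold_right (fun '(gam, f, g) acc => gam * exp (pp_eval f alpha + pp_eval g n) + acc) 0 data.

From Stdlib Require Import Reals Lra Lia ZArith List.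
From Coquelicot Require Import Coquelicot.
Open Scope R_scope.

(** Every pseudo-polynomial has a limit in [R ∪ {±∞}], governed by its lexicographically
    largest monomial [x^a ln^b x] with nonzero total coefficient.  If [g_i] has nonnegative
    exponents and does not tend to [+∞], its derivative (again a pseudo-polynomial, hence of
    eventually constant sign) is eventually nonpositive: otherwise [g_i] would be eventually
    strictly increasing, whereas with nonnegative exponents it is either constant or tends to
    [±∞].  So beyond the threshold [T] of Step 1 every [g_i] is nonincreasing, and
    [Q_L(α, n) <= Q_L(α, T)] for [n >= T].  For each of the finitely many [n̄] in [[c_p, T]],
    Step 2 computes exactly [lim_{α→∞} Q_L(α, n̄)] and compares it with 1.  Hence a True
    answer makes [Q_L(α, ·) < 1] for all large [α], while a bound [Q_L <= 1 - ε] keeps every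
    exponent away from [+∞] and every such limit below 1. *)

(** * Monomials [x^a ln^b x] *)

Definition mon (a b : Z) (x : R) : R := powerRZ x a * powerRZ (ln x) b.

Definition lex_lt (a b a' b' : Z) : Prop := (a < a')%Z \/ (a = a' /\ b < b')%Z.

Lemma ln_pos x : 1 < x -> 0 < ln x.
Proof. intros Hx; rewrite <- ln_1; apply ln_increasing; lra. Qed.

Lemma mon_pos a b x : 1 < x -> 0 < mon a b x.
Proof.
  intros Hx; apply Rmult_lt_0_compat; apply powerRZ_lt; [lra | now apply ln_pos].
Qed.

Lemma mon_mul a b a' b' x :
  1 < x -> mon a b x * mon a' b' x = mon (a + a') (b + b') x.
Proof.
  intros Hx; pose proof (ln_pos x Hx); unfold mon.
  rewrite !powerRZ_add by lra; ring.
Qed.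

Lemma mon_0_0 x : mon 0 0 x = 1.
Proof. unfold mon; simpl; ring. Qed.

Lemma powerRZ_le_inv y z : 1 <= y -> (z <= -1)%Z -> powerRZ y z <= / y.
Proof.
  intros Hy Hz; destruct z as [| |p]; try lia; simpl.
  apply Rinv_le_contravar; [lra|].
  replace (Pos.to_nat p) with (S (pred (Pos.to_nat p))) by lia; simpl.
  pose proof (pow_R1_Rle y (pred (Pos.to_nat p)) Hy); nra.
Qed.

Lemma powerRZ_le_pow_abs y z : 1 <= y -> powerRZ y z <= y ^ Z.abs_nat z.
Proof.
  intros Hy; pose proof (pow_R1_Rle y (Z.abs_nat z) Hy).
  destruct z as [|p|p]; simpl in *; try lra.
  apply Rle_trans with (/ 1); [apply Rinv_le_contravar|]; lra.
Qed.

Lemma is_lim_half : is_lim (fun y => y / 2) p_infty p_infty.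
Proof.
  apply is_lim_spec; intros M; exists (2 * M); intros y Hy; lra.
Qed.

Lemma is_lim_pow_div_exp k : is_lim (fun y => y ^ k / exp y) p_infty 0.
Proof.
  assert (Hhalf : forall h : R -> R, is_lim h p_infty 0 ->
            is_lim (fun y => h (y / 2)) p_infty 0).
  { intros h Hh; apply is_lim_comp with p_infty; [exact Hh | exact is_lim_half |].
    apply filter_forall; discriminate. }
  assert (Hid : is_lim (fun y => y / exp y) p_infty 0).
  { apply is_lim_ext_loc with (fun y => / (exp y / y)).
    - exists 0; intros y Hy; field; split; [apply Rgt_not_eq, exp_pos | lra].
    - exact (is_lim_inv _ _ _ is_lim_div_exp_p ltac:(discriminate)). }
  induction k as [|k IH].
  - apply is_lim_ext with (fun y => / exp y); [intros; simpl; field; apply Rgt_not_eq, exp_pos|].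
    exact (is_lim_inv _ _ _ is_lim_exp_p ltac:(discriminate)).
  - apply is_lim_ext with
      (fun y => 2 ^ S k * ((y / 2) / exp (y / 2) * ((y / 2) ^ k / exp (y / 2)))).
    { intros y.
      replace (y ^ S k) with ((2 * (y / 2)) ^ S k) by (f_equal; field).
      replace (exp y) with (exp (y / 2 + y / 2)) by (f_equal; field).
      rewrite Rpow_mult_distr, exp_plus; simpl; field; apply Rgt_not_eq, exp_pos. }
    replace (Finite 0) with (Rbar_mult (2 ^ S k) (Rbar_mult 0 0)) by (simpl; f_equal; ring).
    apply is_lim_scal_l, is_lim_mult; [apply (Hhalf _ Hid) | apply (Hhalf _ IH) | simpl; auto].
Qed.

Lemma is_lim_pow_ln_div k : is_lim (fun x => ln x ^ k / x) p_infty 0.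
Proof.
  apply is_lim_ext_loc with (fun x => ln x ^ k / exp (ln x)).
  - exists 0; intros x Hx; rewrite exp_ln by lra; reflexivity.
  - apply (is_lim_comp (fun y => y ^ k / exp y)) with p_infty;
      [apply is_lim_pow_div_exp | apply is_lim_ln_p |].
    apply filter_forall; discriminate.
Qed.

Lemma eventually_ln_ge_1 : Rbar_locally p_infty (fun x => 1 < x /\ 1 <= ln x).
Proof.
  pose proof (exp_ineq1 1 ltac:(lra)) as He.
  exists (exp 1); intros x Hx; split; [lra|].
  rewrite <- (ln_exp 1) at 1; apply ln_le; [apply exp_pos | lra].
Qed.

Lemma is_lim_mon_neg a b : lex_lt a b 0 0 -> is_lim (mon a b) p_infty 0.
Proof.
  intros Hab; destruct Hab as [Ha | [-> Hb]].
  - apply is_lim_le_le_loc with (fun _ => 0) (fun x => ln x ^ Z.abs_nat b / x);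
      [| apply is_lim_const | apply is_lim_pow_ln_div].
    generalize eventually_ln_ge_1; apply filter_imp; intros x [Hx Hl].
    split; [left; now apply mon_pos|]; unfold mon, Rdiv; rewrite Rmult_comm.
    apply Rmult_le_compat; try (apply powerRZ_le; lra).
    + apply powerRZ_le_pow_abs; lra.
    + apply powerRZ_le_inv; lra || lia.
  - apply is_lim_le_le_loc with (fun _ => 0) (fun x => / ln x);
      [| apply is_lim_const | exact (is_lim_inv _ _ _ is_lim_ln_p ltac:(discriminate))].
    generalize eventually_ln_ge_1; apply filter_imp; intros x [Hx Hl].
    split; [left; now apply mon_pos|]; unfold mon; rewrite powerRZ_O, Rmult_1_l.
    apply powerRZ_le_inv; lra || lia.
Qed.

Lemma is_lim_mon_pos a b : lex_lt 0 0 a b -> is_lim (mon a b) p_infty p_infty.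
Proof.
  intros Hab; apply is_lim_ext_loc with (fun x => / mon (- a) (- b) x).
  - exists 1; intros x Hx; pose proof (mon_mul a b (- a) (- b) x Hx) as Hm.
    rewrite !Z.add_opp_diag_r, mon_0_0 in Hm.
    pose proof (mon_pos a b x Hx); pose proof (mon_pos (- a) (- b) x Hx).
    field_simplify_eq; lra.
  - apply is_lim_Rinv_0_right; [apply is_lim_mon_neg; unfold lex_lt in *; lia|].
    exists 1; intros x Hx; now apply mon_pos.
Qed.

Lemma ex_lim_mon a b : ex_lim (mon a b) p_infty.
Proof.
  assert (H : lex_lt a b 0 0 \/ (a = 0 /\ b = 0)%Z \/ lex_lt 0 0 a b) by (unfold lex_lt; lia).
  destruct H as [Hneg | [[-> ->] | Hpos]].
  - exists 0; now apply is_lim_mon_neg.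
  - exists 1; apply is_lim_ext with (fun _ => 1);
      [intros; now rewrite mon_0_0 | apply is_lim_const].
  - exists p_infty; now apply is_lim_mon_pos.
Qed.

(** * Leading terms of pseudo-polynomials *)

Definition pp_coef (a b : Z) (P : pp) : R :=
  fold_right (fun '(c, a', b') acc =>
    if (Z.eqb a' a && Z.eqb b' b)%bool then c + acc else acc) 0 P.

Definition pp_drop (a b : Z) (P : pp) : pp :=
  filter (fun '(_, a', b') => negb (Z.eqb a' a && Z.eqb b' b)) P.

Definition pp_below (a b : Z) (P : pp) : Prop :=
  forall c a' b', In (c, a', b') P -> lex_lt a' b' a b.

Lemma pp_eval_split a b P x :
  pp_eval P x = pp_coef a b P * mon a b x + pp_eval (pp_drop a b P) x.
Proof.
  induction P as [|[[c a'] b'] P IH]; simpl; [ring|].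
  destruct (Z.eqb_spec a' a), (Z.eqb_spec b' b); simpl; rewrite IH;
    try (subst; unfold mon; ring).
Qed.

Lemma pp_lex_max_key (t : R * Z * Z) (P : pp) : exists c a b, In (c, a, b) (t :: P) /\
  forall c' a' b', In (c', a', b') (t :: P) -> ~ lex_lt a b a' b'.
Proof.
  induction P as [|u P IH] in t |- *.
  - destruct t as [[c a] b]; exists c, a, b; split; [now left|].
    intros c' a' b' [E | []]; injection E; intros; subst; unfold lex_lt; lia.
  - destruct (IH u) as (c & a & b & Hin & Hmax); destruct t as [[c0 a0] b0].
    assert (Hdec : lex_lt a b a0 b0 \/ ~ lex_lt a b a0 b0) by (unfold lex_lt; lia).
    destruct Hdec as [Hlt | Hge].
    + exists c0, a0, b0; split; [now left|]; intros c' a' b' [E | Hin'].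
      * injection E; intros; subst; unfold lex_lt; lia.
      * specialize (Hmax c' a' b' Hin'); unfold lex_lt in *; lia.
    + exists c, a, b; split; [now right|]; intros c' a' b' [E | Hin'].
      * now injection E; intros; subst.
      * exact (Hmax c' a' b' Hin').
Qed.

Lemma pp_drop_below_max c a b P :
  In (c, a, b) P -> (forall c' a' b', In (c', a', b') P -> ~ lex_lt a b a' b') ->
  pp_below a b (pp_drop a b P) /\ incl (pp_drop a b P) P /\
  (length (pp_drop a b P) < length P)%nat.
Proof.
  intros Hin Hmax; unfold pp_drop; split; [|split].
  - intros c' a' b' H; apply filter_In in H as [H Hkey].
    specialize (Hmax c' a' b' H); unfold lex_lt in *.
    destruct (Z.eqb_spec a' a), (Z.eqb_spec b' b); simpl in Hkey; lia.
  - intros t H; now apply filter_In in H.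
  - pose proof (filter_length_le (fun '(_, a', b') => negb (Z.eqb a' a && Z.eqb b' b)) P).
    enough (length (pp_drop a b P) <> length P) by (unfold pp_drop in *; lia).
    intros E; apply filter_length_forallb, forallb_forall with (x := (c, a, b)) in E; auto.
    now rewrite !Z.eqb_refl in E.
Qed.

Definition pp_leading (P : pp) (S : R) (a b : Z) (P' : pp) : Prop :=
  S <> 0 /\ (exists c, In (c, a, b) P) /\ incl P' P /\ pp_below a b P' /\
  forall x, pp_eval P x = S * mon a b x + pp_eval P' x.

Lemma pp_zero_or_leading P :
  (forall x, pp_eval P x = 0) \/ exists S a b P', pp_leading P S a b P'.
Proof.
  induction P as [P IH] using (well_founded_ind (Wf_nat.well_founded_ltof _ (@length _))).
  destruct P as [|t P0]; [now left|].
  destruct (pp_lex_max_key t P0) as (c & a & b & Hin & Hmax).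
  set (P := t :: P0) in *.
  destruct (pp_drop_below_max c a b P Hin Hmax) as (Hbelow & Hincl & Hlen).
  pose proof (pp_eval_split a b P) as Hsplit.
  destruct (Req_dec (pp_coef a b P) 0) as [Hz | Hnz].
  - destruct (IH (pp_drop a b P) Hlen)
      as [H0 | (S & a2 & b2 & P2 & HS & [c2 Hc2] & Hincl2 & Hb2 & Hid)].
    + left; intros x; rewrite Hsplit, Hz, H0; ring.
    + right; exists S, a2, b2, P2; repeat split; auto.
      * exists c2; now apply Hincl.
      * intros u Hu; now apply Hincl, Hincl2.
      * intros x; rewrite Hsplit, Hz, Hid; ring.
  - right; exists (pp_coef a b P), a, b, (pp_drop a b P); repeat split; eauto.
Qed.

Lemma is_lim_pp_below_div_mon a b P :
  pp_below a b P -> is_lim (fun x => pp_eval P x / mon a b x) p_infty 0.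
Proof.
  induction P as [|[[c a'] b'] P IH]; intros Hbelow.
  - apply is_lim_ext with (fun _ => 0); [intros; simpl; unfold Rdiv; ring | apply is_lim_const].
  - apply is_lim_ext_loc with (fun x => c * mon (a' - a) (b' - b) x + pp_eval P x / mon a b x).
    + exists 1; intros x Hx; pose proof (mon_pos a b x Hx).
      pose proof (mon_mul (a' - a) (b' - b) a b x Hx) as Hm.
      rewrite !Z.sub_add in Hm; simpl.
      replace (c * powerRZ x a' * powerRZ (ln x) b') with (c * mon a' b' x) by (unfold mon; ring).
      rewrite <- Hm; field; lra.
    + replace (Finite 0) with (Finite (c * 0 + 0)) by (f_equal; ring).
      apply is_lim_plus'; [apply (is_lim_scal_l _ c _ 0), is_lim_mon_neg | apply IH].
      * specialize (Hbelow c a' b' (or_introl eq_refl)); unfold lex_lt in *; lia.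
      * intros c'' a'' b'' H; apply (Hbelow c''); now right.
Qed.

Lemma is_lim_pp_div_leading P S a b P' :
  pp_leading P S a b P' -> is_lim (fun x => pp_eval P x / mon a b x) p_infty S.
Proof.
  intros (HS & _ & _ & Hbelow & Hid).
  apply is_lim_ext_loc with (fun x => S + pp_eval P' x / mon a b x).
  - exists 1; intros x Hx; pose proof (mon_pos a b x Hx); rewrite Hid; field; lra.
  - replace (Finite S) with (Finite (S + 0)) by (f_equal; ring).
    apply is_lim_plus'; [apply is_lim_const | now apply is_lim_pp_below_div_mon].
Qed.

Lemma is_lim_pp_leading P S a b P' l :
  pp_leading P S a b P' -> is_lim (mon a b) p_infty l ->
  is_lim (pp_eval P) p_infty (Rbar_mult S l).
Proof.
  intros Hlead Hl.
  apply is_lim_ext_loc with (fun x => pp_eval P x / mon a b x * mon a b x).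
  - exists 1; intros x Hx; pose proof (mon_pos a b x Hx); field; lra.
  - apply is_lim_mult; [now apply is_lim_pp_div_leading with P' | exact Hl |].
    destruct Hlead as [HS _]; destruct l; simpl; auto.
Qed.

Lemma ex_lim_pp P : ex_lim (pp_eval P) p_infty.
Proof.
  destruct (pp_zero_or_leading P) as [H0 | (S & a & b & P' & Hlead)].
  - exists 0; apply is_lim_ext with (fun _ => 0); [intros; now rewrite H0 | apply is_lim_const].
  - destruct (ex_lim_mon a b) as [l Hl].
    exists (Rbar_mult S l); now apply is_lim_pp_leading with a b P'.
Qed.

Lemma is_lim_pp P : is_lim (pp_eval P) p_infty (lim_infty (pp_eval P)).
Proof. apply Lim_correct, ex_lim_pp. Qed.

Lemma is_lim_eventually_gt f l c :
  is_lim f p_infty (Finite l) -> c < l -> Rbar_locally p_infty (fun x => c < f x).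
Proof.
  intros Hf Hl; apply is_lim_spec in Hf; specialize (Hf (mkposreal (l - c) ltac:(lra))).
  revert Hf; apply filter_imp; simpl; intros x Hx; apply Rabs_def2 in Hx; lra.
Qed.

Lemma is_lim_eventually_lt f l c :
  is_lim f p_infty (Finite l) -> l < c -> Rbar_locally p_infty (fun x => f x < c).
Proof.
  intros Hf Hl; apply is_lim_spec in Hf; specialize (Hf (mkposreal (c - l) ltac:(lra))).
  revert Hf; apply filter_imp; simpl; intros x Hx; apply Rabs_def2 in Hx; lra.
Qed.

Lemma pp_eventually_pos_or_nonpos P :
  Rbar_locally p_infty (fun x => 0 < pp_eval P x) \/
  Rbar_locally p_infty (fun x => pp_eval P x <= 0).
Proof.
  destruct (pp_zero_or_leading P) as [H0 | (S & a & b & P' & Hlead)].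
  - right; apply filter_forall; intros x; rewrite H0; lra.
  - assert (Hsq : Rbar_locally p_infty (fun x => 0 < S * (pp_eval P x / mon a b x))).
    { apply is_lim_eventually_gt with (S * S);
        [apply (is_lim_scal_l _ S _ S); now apply is_lim_pp_div_leading with P' |].
      destruct Hlead as [HS _]; nra. }
    assert (Hsgn : Rbar_locally p_infty (fun x => 0 < S * pp_eval P x)).
    { assert (Hm : Rbar_locally p_infty (fun x => 0 < mon a b x))
        by (exists 1; intros; now apply mon_pos).
      generalize (filter_and _ _ Hsq Hm).
      apply filter_imp; intros x [Hx Hmx].
      replace (S * pp_eval P x) with (S * (pp_eval P x / mon a b x) * mon a b x)
        by (field; lra).
      now apply Rmult_lt_0_compat. }
    destruct (Rlt_dec 0 S) as [Hpos | Hneg]; [left | right];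
      revert Hsgn; apply filter_imp; intros x Hx; nra.
Qed.

Definition pp_nonneg (P : pp) : Prop :=
  forall c a b, In (c, a, b) P -> (0 <= a)%Z /\ (0 <= b)%Z.

Lemma pp_nonneg_const_or_unbounded g :
  pp_nonneg g ->
  (exists S, forall x, pp_eval g x = S) \/
  is_lim (pp_eval g) p_infty p_infty \/ is_lim (pp_eval g) p_infty m_infty.
Proof.
  intros Hg; destruct (pp_zero_or_leading g) as [H0 | (S & a & b & P' & Hlead)].
  - left; now exists 0.
  - pose proof Hlead as (HS & [c Hc] & Hincl & Hbelow & Hid).
    destruct (Hg c a b Hc) as [Ha Hb].
    assert (Hcase : (a = 0 /\ b = 0)%Z \/ lex_lt 0 0 a b) by (unfold lex_lt; lia).
    destruct Hcase as [[-> ->] | Hpos].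
    + left; exists S; intros x; rewrite Hid, mon_0_0.
      destruct P' as [|[[c' a'] b'] P'']; [simpl; ring | exfalso].
      specialize (Hbelow c' a' b' (or_introl eq_refl)).
      destruct (Hg c' a' b' (Hincl _ (or_introl eq_refl))); unfold lex_lt in *; lia.
    + right; pose proof (is_lim_pp_leading _ _ _ _ _ _ Hlead (is_lim_mon_pos a b Hpos)) as Hlim.
      simpl in Hlim; destruct (Rle_dec 0 S) as [HS0 | _];
        [destruct (Rle_lt_or_eq_dec 0 S HS0) as [_ | HS0']; [now left | lra] | now right].
Qed.

(** * Derivatives *)

Lemma is_derive_powerRZ a x :
  0 < x -> is_derive (fun t => powerRZ t a) x (IZR a * powerRZ x (a - 1)).
Proof.
  intros Hx.
  pose proof (proj2 (is_derive_Reals _ _ _) (derivable_pt_lim_power x (IZR a) Hx)) as H.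
  rewrite powerRZ_Rpower, minus_IZR by exact Hx.
  apply is_derive_ext_loc with (2 := H).
  exists (mkposreal x Hx); intros t Ht; change (Rabs (t - x) < x) in Ht.
  apply Rabs_def2 in Ht; rewrite powerRZ_Rpower by lra; reflexivity.
Qed.

Lemma is_derive_powerRZ_ln b x :
  (0 <= b)%Z -> 0 < x ->
  is_derive (fun t => powerRZ (ln t) b) x (IZR b * powerRZ (ln x) (b - 1) / x).
Proof.
  intros Hb Hx; rewrite <- (Z2Nat.id b Hb); set (k := Z.to_nat b).
  apply is_derive_ext with (fun t => ln t ^ k); [intros; apply pow_powerRZ|].
  pose proof (is_derive_pow ln k x (/ x) (is_derive_ln x Hx)) as H.
  enough (E : IZR (Z.of_nat k) * powerRZ (ln x) (Z.of_nat k - 1) / x =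
              INR k * / x * ln x ^ pred k) by (rewrite E; exact H).
  destruct k as [|j]; [simpl; unfold Rdiv; rewrite !Rmult_0_l; reflexivity|].
  replace (Z.of_nat (S j) - 1)%Z with (Z.of_nat j) by lia.
  rewrite <- pow_powerRZ, <- INR_IZR_INZ; simpl; field; lra.
Qed.

Lemma is_derive_pp P x :
  (forall c a b, In (c, a, b) P -> (0 <= b)%Z) -> 0 < x ->
  is_derive (pp_eval P) x (pp_eval (pp_deriv P) x).
Proof.
  intros Hb Hx; induction P as [|[[c a] b] P IH].
  - apply is_derive_ext with (fun _ => 0); [reflexivity | apply (is_derive_const 0)].
  - assert (Hterm : is_derive (fun t => c * powerRZ t a * powerRZ (ln t) b) x
      (c * IZR a * powerRZ x (a - 1) * powerRZ (ln x) b +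
       c * IZR b * powerRZ x (a - 1) * powerRZ (ln x) (b - 1))).
    { apply is_derive_ext with (fun t => c * (powerRZ t a * powerRZ (ln t) b));
        [intros t; simpl; ring|].
      pose proof (is_derive_scal _ x c _ (is_derive_mult _ _ x _ _
        (is_derive_powerRZ a x Hx)
        (is_derive_powerRZ_ln b x (Hb c a b (or_introl eq_refl)) Hx) Rmult_comm)) as H.
      unfold plus, mult in H; simpl in H.
      assert (Ea : powerRZ x a = powerRZ x (a - 1) * x).
      { rewrite <- (powerRZ_1 x) at 3; rewrite <- powerRZ_add by lra; f_equal; ring. }
      rewrite Ea in H; evar (l : R); replace (_ + _) with l; [exact H | unfold l; field; lra]. }
    pose proof (is_derive_plus _ _ x _ _ Hterm
      (IH (fun c' a' b' H => Hb c' a' b' (or_intror H)))) as H.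
    unfold plus in H; simpl in H |- *; rewrite <- Rplus_assoc; exact H.
Qed.

Lemma nonincreasing_of_derive_nonpos (f df : R -> R) X :
  (forall x, X <= x -> is_derive f x (df x)) -> (forall x, X <= x -> df x <= 0) ->
  forall y, X <= y -> f y <= f X.
Proof.
  intros Hder Hneg y Hy.
  destruct (MVT_gen f X y df) as (c & Hc & E).
  - intros x Hx; rewrite Rmin_left in Hx by lra; apply Hder; lra.
  - intros x Hx; rewrite Rmin_left in Hx by lra; apply continuity_pt_filterlim.
    apply (ex_derive_continuous f); exists (df x); apply Hder; lra.
  - rewrite Rmin_left, Rmax_right in Hc by lra.
    pose proof (Hneg c (proj1 Hc)); nra.
Qed.

Lemma pp_deriv_eventually_nonpos g :
  pp_nonneg g -> lim_infty (pp_eval g) <> p_infty ->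
  exists T : Z, forall x, IZR T <= x -> pp_eval (pp_deriv g) x <= 0.
Proof.
  intros Hg Hlim.
  destruct (pp_eventually_pos_or_nonpos (pp_deriv g)) as [[M HM] | [M HM]].
  - exfalso; set (X := Rmax M 0 + 1).
    assert (HX : M < X /\ 0 < X) by (unfold X; pose proof (Rmax_l M 0);
      pose proof (Rmax_r M 0); lra).
    assert (Hincr : forall x y, X <= x < y -> pp_eval g x < pp_eval g y).
    { intros x y Hxy; apply (incr_function_le (pp_eval g) X p_infty (pp_eval (pp_deriv g)));
        simpl; [| | lra | lra | exact I].
      - intros t Ht _; apply is_derive_pp; [exact (fun c a b H => proj2 (Hg c a b H)) | lra].
      - intros t Ht _; apply HM; lra. }
    destruct (pp_nonneg_const_or_unbounded g Hg) as [[S HS] | [Hp | Hm]].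
    + specialize (Hincr X (X + 1) ltac:(lra)); rewrite !HS in Hincr; lra.
    + apply Hlim; now apply is_lim_unique.
    + apply is_lim_spec in Hm; destruct (Hm (pp_eval g X)) as [N HN].
      pose proof (Rmax_l N X); pose proof (Rmax_r N X).
      specialize (HN (Rmax N X + 1) ltac:(lra)); specialize (Hincr X (Rmax N X + 1) ltac:(lra)).
      lra.
  - exists (up M); intros x Hx; apply HM.
    pose proof (archimed M); lra.
Qed.

Lemma pp_nonincreasing_beyond_oracle O g T :
  NegativeLB_spec O -> pp_nonneg g -> lim_infty (pp_eval g) <> p_infty ->
  (0 < T)%Z -> (O (pp_deriv g) <= T)%Z ->
  forall x, IZR T <= x -> pp_eval g x <= pp_eval g (IZR T).
Proof.
  intros HO Hg Hlim HT HOT; apply IZR_lt in HT; apply IZR_le in HOT.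
  pose proof (HO _ (pp_deriv_eventually_nonpos g Hg Hlim)) as Hneg.
  apply nonincreasing_of_derive_nonpos with (pp_eval (pp_deriv g)).
  - intros x Hx; apply is_derive_pp; [exact (fun c a b H => proj2 (Hg c a b H)) | lra].
  - intros x Hx; apply Hneg; lra.
Qed.

(** * The procedure Decide *)

Lemma is_lim_pp_plus_const f c :
  is_lim (fun x => pp_eval f x + c) p_infty (lim_infty (fun x => pp_eval f x + c)).
Proof.
  apply Lim_correct; destruct (ex_lim_pp ((c, 0%Z, 0%Z) :: f)) as [l Hl]; exists l.
  apply is_lim_ext with (2 := Hl); intros; simpl; ring.
Qed.

Lemma is_lim_exp_rbar h d :
  is_lim h p_infty d -> d <> p_infty -> is_lim (fun x => exp (h x)) p_infty (rbar_exp d).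
Proof.
  destruct d as [r| |]; simpl; intros Hh Hd.
  - apply is_lim_comp_continuous with (1 := Hh), continuous_exp.
  - congruence.
  - apply (is_lim_comp exp h p_infty 0 m_infty is_lim_exp_m Hh).
    apply filter_forall; discriminate.
Qed.

Lemma gam_exp_lt_1_not_p_infty gam h :
  0 < gam -> (forall M, exists x, M < x /\ gam * exp (h x) < 1) ->
  ~ is_lim h p_infty p_infty.
Proof.
  intros Hgam Hfreq Hh; apply is_lim_spec in Hh; destruct (Hh (ln (/ gam))) as [M HM].
  destruct (Hfreq M) as (x & Hx & Hlt); specialize (HM x Hx).
  apply exp_increasing in HM; rewrite exp_ln in HM by (now apply Rinv_0_lt_compat).
  apply (Rmult_lt_compat_l gam) in HM; [rewrite Rinv_r in HM|]; lra.
Qed.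

Lemma filter_forall_list {T A : Type} {F : (T -> Prop) -> Prop} {FF : Filter F}
  (l : list A) (P : A -> T -> Prop) :
  (forall z, In z l -> F (P z)) -> F (fun x => forall z, In z l -> P z x).
Proof.
  induction l as [|z l IH]; intros H.
  - apply filter_forall; intros x z [].
  - generalize (filter_and _ _ (H z (or_introl eq_refl))
      (IH (fun z' Hz' => H z' (or_intror Hz')))).
    apply filter_imp; intros x [Hz Hl] z' [<- | Hz']; auto.
Qed.

Definition QL_alpha_limit (L : input) (n : R) : R :=
  fold_right (fun '(gam, f, g) acc =>
    gam * rbar_exp (lim_infty (fun alpha => pp_eval f alpha + pp_eval g n)) + acc) 0 L.

Definition alpha_lims_not_p_infty (L : input) (n : R) : Prop :=
  List.Forall (fun '((_, f, g) : R * pp * pp) =>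
    lim_infty (fun alpha => pp_eval f alpha + pp_eval g n) <> p_infty) L.

Definition gammas_nonneg (L : input) : Prop :=
  List.Forall (fun '((gam, _, _) : R * pp * pp) => 0 <= gam) L.

Lemma is_lim_QL L n :
  alpha_lims_not_p_infty L n ->
  is_lim (fun alpha => QL L alpha n) p_infty (QL_alpha_limit L n).
Proof.
  induction L as [|[[gam f] g] L IH]; intros H; simpl.
  - apply is_lim_const.
  - apply Forall_cons_iff in H as [Hhd Htl]; apply is_lim_plus'; [| now apply IH].
    apply (is_lim_scal_l _ gam _ (rbar_exp _)), is_lim_exp_rbar;
      [apply is_lim_pp_plus_const | exact Hhd].
Qed.

Lemma QL_alpha_limit_nonneg L n : gammas_nonneg L -> 0 <= QL_alpha_limit L n.
Proof.
  induction L as [|[[gam f] g] L IH]; intros H; simpl; [lra|].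
  apply Forall_cons_iff in H as [Hhd Htl].
  assert (0 <= rbar_exp (lim_infty (fun alpha => pp_eval f alpha + pp_eval g n)))
    by (destruct (lim_infty _); simpl; [left; apply exp_pos | lra | lra]).
  specialize (IH Htl); nra.
Qed.

Lemma QL_nonneg L alpha n : gammas_nonneg L -> 0 <= QL L alpha n.
Proof.
  induction L as [|[[gam f] g] L IH]; intros H; simpl; [lra|].
  apply Forall_cons_iff in H as [Hhd Htl].
  pose proof (exp_pos (pp_eval f alpha + pp_eval g n)); specialize (IH Htl); nra.
Qed.

Lemma QL_term_le L alpha n gam f g :
  gammas_nonneg L -> In (gam, f, g) L ->
  gam * exp (pp_eval f alpha + pp_eval g n) <= QL L alpha n.
Proof.
  induction L as [|[[gam1 f1] g1] L IH]; intros H Hin; [destruct Hin|].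
  pose proof H as H'; apply Forall_cons_iff in H' as [Hhd Htl]; simpl.
  pose proof (exp_pos (pp_eval f1 alpha + pp_eval g1 n)).
  destruct Hin as [E | Hin].
  - injection E as -> -> ->; pose proof (QL_nonneg L alpha n Htl); lra.
  - specialize (IH Htl Hin); nra.
Qed.

Lemma QL_le_of_exponents_le L alpha n m :
  gammas_nonneg L ->
  List.Forall (fun '((_, _, g) : R * pp * pp) => pp_eval g n <= pp_eval g m) L ->
  QL L alpha n <= QL L alpha m.
Proof.
  induction L as [|[[gam f] g] L IH]; intros H Hle; simpl; [lra|].
  apply Forall_cons_iff in H as [Hhd Htl]; apply Forall_cons_iff in Hle as [Hg Hle].
  assert (exp (pp_eval f alpha + pp_eval g n) <= exp (pp_eval f alpha + pp_eval g m))
    by (destruct Hg as [Hlt | ->]; [left; apply exp_increasing; lra | right; reflexivity]).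
  specialize (IH Htl Hle); nra.
Qed.

Lemma In_Zrange lo hi z : In z (Zrange lo hi) <-> (lo <= z <= hi)%Z.
Proof.
  unfold Zrange; rewrite in_map_iff; split.
  - intros (i & <- & Hi); apply in_seq in Hi; lia.
  - intros H; exists (Z.to_nat (z - lo)); split; [lia | apply in_seq; lia].
Qed.

Lemma decide_step1_some O L T T' :
  decide_step1 O L T = Some T' ->
  (T <= T')%Z /\
  List.Forall (fun '((_, _, g) : R * pp * pp) =>
    lim_infty (pp_eval g) <> p_infty /\ (O (pp_deriv g) <= T')%Z) L.
Proof.
  induction L as [|[[gam f] g] L IH] in T |- *; simpl; intros H.
  - injection H as ->; split; [lia | constructor].
  - destruct (lim_infty (pp_eval g)) eqn:E; try discriminate;
      destruct (IH _ H) as [HT HL];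
      (split; [lia | constructor; [split; [congruence | lia] | exact HL]]).
Qed.

Lemma decide_step1_exists O L T :
  List.Forall (fun '((_, _, g) : R * pp * pp) => lim_infty (pp_eval g) <> p_infty) L ->
  exists T', decide_step1 O L T = Some T'.
Proof.
  induction L as [|[[gam f] g] L IH] in T |- *; simpl; intros H; [eauto|].
  apply Forall_cons_iff in H as [Hg HL].
  destruct (lim_infty (pp_eval g)); [apply IH; exact HL | congruence | apply IH; exact HL].
Qed.

Lemma decide_step2_spec L n r :
  r < 1 -> gammas_nonneg L ->
  decide_step2 L n r = true <-> alpha_lims_not_p_infty L n /\ r + QL_alpha_limit L n < 1.
Proof.
  induction L as [|[[gam f] g] L IH] in r |- *; intros Hr Hgam; simpl.
  - split; [intros _; split; [constructor | lra] | reflexivity].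
  - apply Forall_cons_iff in Hgam as [Hg HL]; unfold alpha_lims_not_p_infty.
    rewrite Forall_cons_iff; fold (alpha_lims_not_p_infty L n).
    pose proof (QL_alpha_limit_nonneg L n HL).
    destruct (lim_infty _) as [d | | ] eqn:E; simpl;
      [| split; [discriminate | intros [[Hne _] _]; now contradict Hne] |];
      (destruct (Rle_dec 1 _); [split; [discriminate | intros; lra] |]);
      (rewrite IH by (exact HL || lra); split;
        [intros [H1 H2]; repeat split; [discriminate | exact H1 | lra]
        | intros [[_ H1] H2]; split; [exact H1 | lra]]).
Qed.

Lemma Decide_true_eventually_QL_lt_1 O cp data :
  NegativeLB_spec O -> (0 < cp)%Z -> gammas_nonneg data ->
  List.Forall (fun '((_, _, g) : R * pp * pp) => pp_nonneg g) data ->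
  Decide O cp data = true ->
  exists A, forall alpha, A <= alpha -> forall n, (cp <= n)%Z -> QL data alpha (IZR n) < 1.
Proof.
  intros HO Hcp Hgam Hg HD; unfold Decide in HD.
  destruct (decide_step1 O data cp) as [T|] eqn:E1; [|discriminate].
  destruct (decide_step1_some _ _ _ _ E1) as [HcT Hitems].
  rewrite forallb_forall in HD.
  assert (Hrange : Rbar_locally p_infty
            (fun alpha => forall z, In z (Zrange cp T) -> QL data alpha (IZR z) < 1)).
  { apply filter_forall_list; intros z Hz.
    destruct (proj1 (decide_step2_spec data (IZR z) 0 ltac:(lra) Hgam) (HD z Hz)) as [Hne Hlt].
    apply is_lim_eventually_lt with (QL_alpha_limit data (IZR z)); [now apply is_lim_QL | lra]. }
  assert (Hdecr : List.Forall (fun '((_, _, g) : R * pp * pp) =>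
            forall n, (T <= n)%Z -> pp_eval g (IZR n) <= pp_eval g (IZR T)) data).
  { generalize (Forall_and Hg Hitems); apply Forall_impl.
    intros [[gam f] g] (Hgn & Hlim & HOT) n Hn.
    apply pp_nonincreasing_beyond_oracle with O; auto; [lia | now apply IZR_le]. }
  destruct Hrange as [A HA]; exists (A + 1); intros alpha Halpha n Hn.
  destruct (Z_le_gt_dec n T) as [HnT | HnT].
  - apply HA; [lra | apply In_Zrange; lia].
  - apply Rle_lt_trans with (QL data alpha (IZR T)); [| apply HA; [lra | apply In_Zrange; lia]].
    apply QL_le_of_exponents_le; [exact Hgam |].
    revert Hdecr; apply Forall_impl; intros [[gam f] g] Hdecr; apply Hdecr; lia.
Qed.

Lemma lim_not_p_infty_of_exp_bounded gam f g a0 cp :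
  0 < gam -> (forall n, (cp <= n)%Z -> gam * exp (pp_eval f a0 + pp_eval g (IZR n)) < 1) ->
  lim_infty (pp_eval g) <> p_infty.
Proof.
  intros Hgam Hbound Hlim; pose proof (is_lim_pp g) as Hg; rewrite Hlim in Hg.
  apply (gam_exp_lt_1_not_p_infty gam (fun x => pp_eval f a0 + pp_eval g x) Hgam).
  - intros M; exists (IZR (Z.max cp (up M))); split; [| apply Hbound; lia].
    pose proof (archimed M) as [HM _]; pose proof (IZR_le _ _ (Z.le_max_r cp (up M))); lra.
  - apply (is_lim_plus _ _ _ (pp_eval f a0) p_infty);
      [apply is_lim_const | exact Hg | reflexivity].
Qed.

Lemma alpha_lim_not_p_infty_of_exp_bounded gam f c a0 :
  0 < gam -> (forall alpha, a0 <= alpha -> gam * exp (pp_eval f alpha + c) < 1) ->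
  lim_infty (fun alpha => pp_eval f alpha + c) <> p_infty.
Proof.
  intros Hgam Hbound Hlim; pose proof (is_lim_pp_plus_const f c) as Hf; rewrite Hlim in Hf.
  apply (gam_exp_lt_1_not_p_infty gam (fun alpha => pp_eval f alpha + c) Hgam); [| exact Hf].
  intros M; exists (Rmax M a0 + 1); pose proof (Rmax_l M a0); pose proof (Rmax_r M a0).
  split; [lra | apply Hbound; lra].
Qed.

Lemma QL_bounded_Decide_true O cp data eps :
  List.Forall (fun '((gam, _, _) : R * pp * pp) => 0 < gam) data -> 0 < eps ->
  (exists alpha0, forall alpha, alpha0 <= alpha ->
     forall n, (cp <= n)%Z -> QL data alpha (IZR n) <= 1 - eps) ->
  Decide O cp data = true.
Proof.
  intros Hgam Heps [a0 H0].
  assert (Hgam0 : gammas_nonneg data)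
    by (revert Hgam; apply Forall_impl; intros [[gam f] g]; lra).
  assert (Hterm : forall gam f g, In (gam, f, g) data -> forall alpha n, a0 <= alpha ->
            (cp <= n)%Z -> gam * exp (pp_eval f alpha + pp_eval g (IZR n)) < 1).
  { intros gam f g Hin alpha n Ha Hn; specialize (H0 alpha Ha n Hn).
    pose proof (QL_term_le data alpha (IZR n) gam f g Hgam0 Hin); lra. }
  assert (Hstep1 : List.Forall (fun '((_, _, g) : R * pp * pp) =>
            lim_infty (pp_eval g) <> p_infty) data).
  { apply Forall_forall; intros [[gam f] g] Hin.
    apply (lim_not_p_infty_of_exp_bounded gam f g a0 cp);
      [exact (proj1 (Forall_forall _ _) Hgam _ Hin) | intros n Hn; apply Hterm; auto; lra]. }
  destruct (decide_step1_exists O data cp Hstep1) as [T E1]; unfold Decide; rewrite E1.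
  apply forallb_forall; intros z Hz; apply In_Zrange in Hz.
  assert (Hne : alpha_lims_not_p_infty data (IZR z)).
  { apply Forall_forall; intros [[gam f] g] Hin.
    apply (alpha_lim_not_p_infty_of_exp_bounded gam f _ a0);
      [exact (proj1 (Forall_forall _ _) Hgam _ Hin) | intros alpha Ha; apply Hterm; auto; lia]. }
  assert (Hle : Rbar_le (QL_alpha_limit data (IZR z)) (1 - eps)).
  { apply (is_lim_le_loc (fun alpha => QL data alpha (IZR z)) (fun _ => 1 - eps) p_infty);
      [| now apply is_lim_QL | apply is_lim_const].
    exists a0; intros alpha Ha; apply H0; lra || lia. }
  apply decide_step2_spec; [lra | exact Hgam0 | split; [exact Hne | simpl in Hle; lra]].
Qed.

Theorem mainTheorem1 (O : pp -> Z) (HO : NegativeLB_spec O)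
  (cp : Z) (data : input)
  (Hcp : (1 <= cp)%Z)
  (Hk : (1 <= length data)%nat)
  (Hgam : forall gam f g, In (gam, f, g) data -> 0 < gam)
  (Hg : forall gam f g, In (gam, f, g) data ->
          forall c a b, In (c, a, b) g -> (0 <= a)%Z /\ (0 <= b)%Z) :
  ((forall alpha0 : R, exists alpha : R, alpha0 <= alpha /\
       exists n : Z, (cp <= n)%Z /\ QL data alpha (IZR n) > 1) ->
     Decide O cp data = false)
  /\
  (forall eps : R, 0 < eps ->
     (exists alpha0 : R, forall alpha : R, alpha0 <= alpha ->
        forall n : Z, (cp <= n)%Z -> QL data alpha (IZR n) <= 1 - eps) ->
     Decide O cp data = true).
Proof.
  assert (Hpos : List.Forall (fun '((gam, _, _) : R * pp * pp) => 0 < gam) data)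
    by (apply Forall_forall; intros [[gam f] g]; apply Hgam).
  assert (Hnonneg : gammas_nonneg data)
    by (revert Hpos; apply Forall_impl; intros [[gam f] g]; lra).
  assert (Hgs : List.Forall (fun '((_, _, g) : R * pp * pp) => pp_nonneg g) data)
    by (apply Forall_forall; intros [[gam f] g] Hin; exact (Hg gam f g Hin)).
  split.
  - intros Hviolated; destruct (Decide O cp data) eqn:ED; [exfalso | reflexivity].
    destruct (Decide_true_eventually_QL_lt_1 O cp data HO ltac:(lia) Hnonneg Hgs ED) as [A HA].
    destruct (Hviolated A) as (alpha & Halpha & n & Hn & Hgt).
    specialize (HA alpha Halpha n Hn); lra.
  - intros eps Heps Hbounded; now apply QL_bounded_Decide_true with eps.
Qed.
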